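(* Let $n\ge 2$ be an integer and let $n=n_0+n_1$ with integers $n_0\ge n_1\ge 1$. Then $(n_0,n_1)$ is a hypercubic bipartition (HCBP) of $n$ if and only if $f(n)=n_1+f(n_1)+f(n_0)$.
   Context: Let $f:\mathbb{N}\to\mathbb{N}_0$ be defined by $f(1)=0$ and $f(n)=\lfloor n/2\rfloor+f(\lfloor n/2\rfloor)+f(\lceil n/2\rceil)$ for $n>1$. For $k\ge 0$ and $0\le m<2^k$, let $\beta_k(m)\in\{0,1\}^k$ be the point whose $j$-th coordinate is the binary digit of $m$ of weight $2^{k-j}$ (so the last binary digit of $m$ is the $k$-th coordinate). For $n\ge 2$ put $k=\lceil \log_2 n\rceil$. A pair $(n_0,n_1)$ of integers with $n=n_0+n_1$ and $n_0\ge n_1\ge 1$ is a hypercubic bipartition (HCBP) of $n$ if there is $i\in\{1,\dots,k\}$ such that the hyperplane $x_i=1/2$ splits the $n$ points $\beta_k(0),\dots,\beta_k(n-1)$ into $n_0$ points on one side and $n_1$ points on the other (i.e. among these points, $n_0$ have one value of the $i$-th coordinate and $n_1$ have the other). *)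

From mathcomp Require Import all_boot.
Set Implicit Arguments. Unset Strict Implicit. Unset Printing Implicit Defensive.

(* f : N -> N0 with f 1 = 0, f n = n/2 + f(floor(n/2)) + f(ceil(n/2)) for n > 1.
   Implemented by fuel; f_aux n n is the intended value (fuel n suffices since
   the arguments strictly decrease). f 0 is irrelevant (set to 0). *)
Fixpoint f_aux (fuel n : nat) : nat :=
  match fuel with
  | 0 => 0
  | fuel'.+1 =>
      if n <= 1 then 0
      else n./2 + f_aux fuel' n./2 + f_aux fuel' (uphalf n)
  end.

Definition f (n : nat) : nat := f_aux n n.

(* j-th coordinate (1 <= j <= k) of beta_k(m): binary digit of m of weight 2^(k-j). *)
Definition beta (k m j : nat) : bool := odd (m %/ 2 ^ (k - j)).

Definition count_side (k n j : nat) : nat :=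
  count (fun m => beta k m j) (iota 0 n).

Definition HCBP (n n0 n1 : nat) : Prop :=
  let k := up_log 2 n in
  exists2 j, (1 <= j <= k) &
    ((count_side k n j == n1) && (n - count_side k n j == n0)) ||
    ((count_side k n j == n0) && (n - count_side k n j == n1)).

From mathcomp Require Import all_boot zify.
Set Implicit Arguments. Unset Strict Implicit. Unset Printing Implicit Defensive.

(* From f(2m) = 2 f(m) + m and f(2m+1) = f(m) + f(m+1) + m, an induction on
   a + b along the parities of a and b shows f(a + b) >= f(a) + f(b) + min(a, b),
   with equality exactly when, for some e, 2^e divides a or b and |a - b| <= 2^e.
   On the cube side, the hyperplane of the coordinate of weight 2^e cuts the
   first n points into parts A, B with 2^e | A and |A - B| <= 2^e, and every
   such decomposition of n is realised by that hyperplane. *)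

Lemma f_aux_fuel fuel1 fuel2 n :
  n <= fuel1 -> n <= fuel2 -> f_aux fuel1 n = f_aux fuel2 n.
Proof.
elim: fuel1 fuel2 n => [|F IH] [|F2] [|[|n]] //= n_le1 n_le2; try lia.
rewrite uphalf_half; have := odd_double_half n.
by case: (odd n) => /= n_eq; rewrite ?add0n !(IH F2); lia.
Qed.

Lemma fE n : 1 < n -> f n = n./2 + f n./2 + f (uphalf n).
Proof.
case: n => [|n] // n_gt1; rewrite {1}/f /= ifN; last by lia.
have [half_le uphalf_le] : n./2.+1 <= n /\ uphalf n <= n.
  by rewrite uphalf_half; have := odd_double_half n; case: (odd n) => /=; lia.
by rewrite /f (@f_aux_fuel n (uphalf n)) ?(@f_aux_fuel n n./2.+1).
Qed.

Lemma f_double m : f m.*2 = (f m).*2 + m.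
Proof.
case: m => [|m] //; rewrite fE; last by lia.
by rewrite uphalf_double doubleK; lia.
Qed.

Lemma f_doubleS m : f m.*2.+1 = f m + f m.+1 + m.
Proof.
case: m => [|m] //; rewrite fE; last by lia.
by rewrite uphalf_half /= odd_double /= add1n uphalf_double; lia.
Qed.

Definition dyadic_split (a b : nat) : Prop :=
  exists e, (2 ^ e %| a \/ 2 ^ e %| b) /\ a - b <= 2 ^ e /\ b - a <= 2 ^ e.

Lemma dvdn_double e m : (2 ^ e.+1 %| m.*2) = (2 ^ e %| m).
Proof. by rewrite expnS -mul2n dvdn_pmul2l. Qed.

Lemma pow2S_ndvd_odd e m : ~~ (2 ^ e.+1 %| m.*2.+1).
Proof.
apply/negP => /(dvdn_trans (dvdn_exp2l 2 (isT : 1 <= e.+1))).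
by rewrite dvdn2 /= odd_double.
Qed.

Lemma pow2_dvd_even e m : 1 < 2 ^ e -> 2 ^ e %| m -> ~~ odd m.
Proof.
case: e => [|e] // _; rewrite -dvdn2; apply: dvdn_trans.
by rewrite (dvdn_exp2l 2 (isT : 1 <= e.+1)).
Qed.

Lemma dyadic_split_sym a b : dyadic_split a b -> dyadic_split b a.
Proof. by case=> e [dvd_ab [ab ba]]; exists e; split; [case: dvd_ab; auto | lia]. Qed.

Lemma dyadic_split_near a b : a <= b.+1 -> b <= a.+1 -> dyadic_split a b.
Proof. by move=> ab ba; exists 0; rewrite expn0 dvd1n; split; [left | lia]. Qed.

Lemma dyadic_split0 b : dyadic_split 0 b.
Proof.
exists b; rewrite dvdn0; split; first by left.
by have := ltn_expl b (isT : 1 < 2); lia.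
Qed.

Lemma dyadic_split_double x y : dyadic_split x.*2 y.*2 <-> dyadic_split x y.
Proof.
split.
- case=> -[|e] [dvd_xy bounds].
    by apply: dyadic_split_near; rewrite expn0 in bounds; lia.
  by exists e; rewrite !dvdn_double expnS in dvd_xy bounds *; split; [|lia].
- case=> e [dvd_xy bounds]; exists e.+1.
  by rewrite !dvdn_double expnS; split; [|lia].
Qed.

Lemma dyadic_split_odd x y : dyadic_split x.*2.+1 y.*2.+1 <-> x = y.
Proof.
split; last by move=> ->; apply: dyadic_split_near.
case=> -[|e] [dvd_xy bounds]; first by rewrite expn0 in bounds; lia.
by case: dvd_xy; rewrite (negPf (pow2S_ndvd_odd _ _)).
Qed.

Lemma dyadic_split_double_odd e x y :
  2 ^ e %| x -> x - y <= 2 ^ e -> y.+1 - x <= 2 ^ e -> dyadic_split x.*2 y.*2.+1.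
Proof. by move=> dvd_x *; exists e.+1; rewrite dvdn_double expnS; split; [left | lia]. Qed.

Lemma dyadic_split_add2 a : dyadic_split a a.+2 -> ~~ odd a.
Proof.
case=> e [dvd_a bounds]; have pow_gt1 : 1 < 2 ^ e by lia.
by case: dvd_a => /(pow2_dvd_even pow_gt1); rewrite //= negbK.
Qed.

Lemma dyadic_split_adjacent x u v e1 e2 :
  u.+1 = v \/ v.+1 = u -> 1 < 2 ^ e1 ->
  2 ^ e1 %| x -> x - u <= 2 ^ e1 -> u - x <= 2 ^ e1 ->
  2 ^ e2 %| x \/ 2 ^ e2 %| v -> x - v <= 2 ^ e2 -> v - x <= 2 ^ e2 ->
  exists e, [/\ 2 ^ e %| x, x - u <= 2 ^ e, u - x <= 2 ^ e,
                x - v <= 2 ^ e & v - x <= 2 ^ e].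
Proof.
move=> adj pow_gt1 dvd_x xu ux dvd_xv xv vx.
have [close | far] := boolP ((x - v <= 2 ^ e1) && (v - x <= 2 ^ e1)).
  by case/andP: close; exists e1.
(* Now |x - v| = 2 ^ e1 + 1, so 2 ^ e1 cannot divide both x and v. *)
have lt_e12 : 2 ^ e1 < 2 ^ e2 by lia.
case: dvd_xv => [dvd2_x | dvd2_v]; first by exists e2; split => //; lia.
have dvd_v : 2 ^ e1 %| v.
  apply: dvdn_trans dvd2_v; apply/dvdn_exp2l/ltnW.
  by rewrite -(ltn_exp2l _ _ (isT : 1 < 2)).
have : 2 ^ e1 %| (x - v) + (v - x) by rewrite dvdn_add // dvdn_sub.
have -> : (x - v) + (v - x) = 2 ^ e1 + 1 by lia.
by rewrite dvdn_addr // dvdn1 => /eqP; lia.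
Qed.

Lemma dyadic_split_double_odd_far x y :
  2 <= (x - y) + (y - x) -> 2 <= (x - y.+1) + (y.+1 - x) ->
  dyadic_split x y -> dyadic_split x y.+1 -> dyadic_split x.*2 y.*2.+1.
Proof.
move=> far_y far_y1 [e1 [dvd1 [xy1 yx1]]] [e2 [dvd2 [xy2 yx2]]].
have gt1_e1 : 1 < 2 ^ e1 by lia.
have gt1_e2 : 1 < 2 ^ e2 by lia.
suff [e [dvd_x xy _ _ yx]] : exists e, [/\ 2 ^ e %| x, x - y <= 2 ^ e,
    y - x <= 2 ^ e, x - y.+1 <= 2 ^ e & y.+1 - x <= 2 ^ e].
  exact: (dyadic_split_double_odd dvd_x).
case: dvd1 => [dvd1_x | dvd1_y].
  exact: (dyadic_split_adjacent (or_introl erefl) gt1_e1 dvd1_x xy1 yx1 dvd2 xy2 yx2).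
case: dvd2 => [dvd2_x | dvd2_y1].
  have [e [? ? ? ? ?]] := dyadic_split_adjacent (or_intror erefl) gt1_e2 dvd2_x
                            xy2 yx2 (or_intror dvd1_y) xy1 yx1.
  by exists e.
have := pow2_dvd_even gt1_e2 dvd2_y1.
by rewrite /= (pow2_dvd_even gt1_e1 dvd1_y).
Qed.

Lemma dyadic_split_even_odd x y :
  dyadic_split x.*2 y.*2.+1 <-> dyadic_split x y /\ dyadic_split x y.+1.
Proof.
split.
- case=> -[|e] [dvd_xy bounds].
    by rewrite expn0 in bounds; split; apply: dyadic_split_near; lia.
  case: dvd_xy => [dvd_x | dvd_y].
  2: by rewrite (negPf (pow2S_ndvd_odd _ _)) in dvd_y.
  rewrite dvdn_double expnS in dvd_x bounds.
  by split; exists e; split; [left | lia | left | lia].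
- case=> split_y split_y1.
  have [near | [x_eq | [y_eq | far]]] :
      (y <= x <= y.+1) \/ x = y.+2 \/ y = x.+1 \/
      (2 <= (x - y) + (y - x) /\ 2 <= (x - y.+1) + (y.+1 - x)) by lia.
  + by apply: dyadic_split_near; lia.
  + have /dyadic_split_add2 : dyadic_split y y.+2 by rewrite -x_eq; apply: dyadic_split_sym.
    by move=> y_even; apply: (@dyadic_split_double_odd 1); rewrite ?dvdn2 ?x_eq //; lia.
  + have /dyadic_split_add2 x_even : dyadic_split x x.+2 by rewrite -y_eq.
    by apply: (@dyadic_split_double_odd 1); rewrite ?dvdn2 //; lia.
  + by case: far => far_y far_y1; apply: dyadic_split_double_odd_far.
Qed.

Lemma parity_pair_ind (P : nat -> nat -> Prop) :
  (forall b, P 0 b) -> (forall a b, P a b -> P b a) ->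
  (forall x y, 0 < x -> P x y -> P x.*2 y.*2) ->
  (forall x y, P x y -> P x y.+1 -> P x.*2 y.*2.+1) ->
  (forall x y, P x.+1 y -> P x y.+1 -> P x.*2.+1 y.*2.+1) ->
  forall a b, P a b.
Proof.
move=> P0 Psym Pee Peo Poo a b.
have [s lt_ab] := ubnP (a + b); elim: s a b lt_ab => // s IH a b.
rewrite -[a]odd_double_half -[b]odd_double_half.
case: (odd a) (odd b) a./2 b./2 => [] [] x y lt_ab /=; rewrite ?add0n ?add1n in lt_ab *.
- by apply: Poo; apply: IH; lia.
- case: (posnP y) => [-> | y_gt0]; first exact/Psym/P0.
  by apply/Psym/Peo; apply: IH; lia.
- case: (posnP x) => [-> | x_gt0]; first exact: P0.
  by apply: Peo; apply: IH; lia.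
- case: (posnP x) => [-> | x_gt0]; first exact: P0.
  by apply: Pee => //; apply: IH; lia.
Qed.

Lemma f_superadd a b : f a + f b + minn a b <= f (a + b).
Proof.
move: a b; apply: parity_pair_ind => [b | a b | x y _ | x y | x y].
- by rewrite add0n min0n addn0.
- by rewrite [b + a]addnC [minn b a]minnC; lia.
- by rewrite -doubleD !f_double; lia.
- by rewrite !addnS -doubleD f_doubleS f_double f_doubleS; lia.
- by rewrite !addSn !addnS -doubleD -doubleS f_double !f_doubleS; lia.
Qed.

Lemma f_superadd_eq a b :
  f (a + b) = f a + f b + minn a b <-> dyadic_split a b.
Proof.
move: a b; apply: parity_pair_ind => [b | a b | x y _ | x y | x y].
- by rewrite add0n min0n addn0; split => // _; apply: dyadic_split0.
- rewrite [b + a]addnC [minn b a]minnC => eq_ab.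
  split => [eq_ba | /dyadic_split_sym/eq_ab]; last by lia.
  by apply/dyadic_split_sym/eq_ab; lia.
- by rewrite dyadic_split_double -doubleD !f_double => <-; lia.
- rewrite dyadic_split_even_odd => <- <-.
  have := f_superadd x y; have := f_superadd x y.+1.
  by rewrite !addnS -doubleD f_doubleS f_double f_doubleS; lia.
- rewrite dyadic_split_odd; have := f_superadd x.+1 y; have := f_superadd x y.+1.
  rewrite !addSn !addnS -doubleD -doubleS f_double !f_doubleS.
  move=> ge_xy1 ge_x1y eq_x1y eq_xy1.
  split => [|eq_xy]; first by case: (ltngtP x y); lia.
  subst y; have near_x1x : dyadic_split x.+1 x by apply: dyadic_split_near; lia.
  have near_xx1 : dyadic_split x x.+1 by apply: dyadic_split_near; lia.
  by move: near_x1x near_xx1 => /eq_x1y eq1 /eq_xy1 eq2; lia.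
Qed.

Definition count_digit (P n : nat) : nat := count (fun m => odd (m %/ P)) (iota 0 n).

Lemma count_digitS P n : count_digit P n.+1 = count_digit P n + odd (n %/ P).
Proof. by rewrite /count_digit -addn1 iotaD count_cat /= addn0. Qed.

Lemma count_digit_small P r : 0 < P -> r <= P.*2 -> count_digit P r = r - P.
Proof.
move=> P_gt0; elim: r => [|r IH] r_le //; rewrite count_digitS IH; last by lia.
have [lt_rP | le_Pr] := ltnP r P; first by rewrite divn_small //; lia.
have -> : r = 1 * P + (r - P) by lia.
by rewrite divnMDl // divn_small /=; lia.
Qed.

Lemma count_digit_period P n : 0 < P -> count_digit P (P.*2 + n) = P + count_digit P n.
Proof.
move=> P_gt0; elim: n => [|n IH].
  by rewrite addn0 count_digit_small // -addnn addnK /count_digit /= addn0.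
by rewrite addnS !count_digitS IH -mul2n divnMDl // add2n /= negbK addnA.
Qed.

Lemma count_digit_divn P q r : 0 < P -> r <= P.*2 ->
  count_digit P (q * P.*2 + r) = q * P + (r - P).
Proof.
move=> P_gt0 r_le; elim: q => [|q IH]; first exact: count_digit_small.
by rewrite !mulSn -addnA count_digit_period // IH addnA.
Qed.

Lemma count_digit_min P A B : 0 < P -> P %| A -> A - B <= P -> B - A <= P ->
  count_digit P (A + B) = minn A B.
Proof.
move=> P_gt0 /dvdnP [t ->] AB BA.
have [le_AB | lt_BA] := leqP (t * P) B.
  have -> : t * P + B = t * P.*2 + (B - t * P) by rewrite -doubleMr; lia.
  by rewrite count_digit_divn //; lia.
case: t lt_BA AB BA => [|t]; first by rewrite mul0n.
rewrite mulSn => lt_BA AB BA.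
have -> : P + t * P + B = t * P.*2 + (P.*2 - (P + t * P - B)) by rewrite -doubleMr; lia.
by rewrite count_digit_divn //; lia.
Qed.

Lemma dyadic_halves P n : 0 < P ->
  exists A B, [/\ n = A + B, P %| A, A - B <= P & B - A <= P].
Proof.
move=> P_gt0; have n_eq := divn_eq n P.*2; rewrite -doubleMr in n_eq.
have r_lt : n %% P.*2 < P.*2 by rewrite ltn_mod; lia.
move: n_eq r_lt; set q := n %/ P.*2; set r := n %% P.*2 => n_eq r_lt.
have [le_rP | lt_Pr] := leqP r P.
  by exists (q * P), (q * P + r); split; rewrite ?dvdn_mull //; lia.
by exists (q.+1 * P), (q * P + (r - P)); split; rewrite ?dvdn_mull // mulSn; lia.
Qed.

Lemma dyadic_split_count_digit e n :
  dyadic_split (count_digit (2 ^ e) n) (n - count_digit (2 ^ e) n).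
Proof.
have [A [B [-> dvd_A AB BA]]] := dyadic_halves n (expn_gt0 2 e).
have split_AB : dyadic_split A B by exists e; split; [left | lia].
rewrite count_digit_min ?expn_gt0 //; case: leqP => _; first by rewrite addKn.
by rewrite addnK; apply: dyadic_split_sym.
Qed.

Lemma HCBP_dyadic_split n0 n1 : 0 < n1 <= n0 ->
  HCBP (n0 + n1) n0 n1 <-> dyadic_split n0 n1.
Proof.
move=> /andP [n1_gt0 le_n10]; rewrite /HCBP /count_side /beta; set k := up_log 2 _.
split.
- case=> j _; rewrite -/(count_digit (2 ^ (k - j)) (n0 + n1)).
  have := dyadic_split_count_digit (k - j) (n0 + n1).
  move=> + /orP[] /andP [/eqP c_eq /eqP nc_eq]; rewrite nc_eq c_eq //.
  exact: dyadic_split_sym.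
- case=> e [dvd_n01 bounds].
  have lt_ek : e < k.
    rewrite -(ltn_exp2l _ _ (isT : 1 < 2)); apply: (@leq_trans (n0 + n1)).
      by case: dvd_n01 => /dvdn_leq; lia.
    exact: up_logP.
  exists (k - e); first by apply/andP; lia.
  rewrite subKn ?(ltnW lt_ek) // -/(count_digit (2 ^ e) (n0 + n1)).
  have -> : count_digit (2 ^ e) (n0 + n1) = n1.
    case: dvd_n01 => dvd; [rewrite count_digit_min | rewrite addnC count_digit_min];
      by rewrite ?expn_gt0 //; lia.
  by rewrite addnK !eqxx.
Qed.

Theorem theorem6 (n n0 n1 : nat) :
  2 <= n -> n = n0 + n1 -> n1 <= n0 -> 1 <= n1 ->
  (HCBP n n0 n1 <-> f n = n1 + f n1 + f n0).
Proof.
move=> _ -> le_n10 n1_gt0.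
rewrite HCBP_dyadic_split ?n1_gt0 // -f_superadd_eq (minn_idPr le_n10).
lia.
Qed.
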